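(* Let $A=KQ/I$ be a finite-dimensional gentle algebra and let $C=c_1\cdots c_m$ be a string for $A$ with an intersecting auto-reaching given by substrings $C[i,j]$ and $C[i',j']$ with $i<i'\le j<j'$. Then $C[i,i']$ is cyclically equivalent to $C[j,j']$, and $C[i,j]$ is a substring of $(C[i,i'])^\infty$, i.e. the word $c_i\cdots c_{j-1}$ is a consecutive subword of the infinite periodic word obtained by repeating $c_i\cdots c_{i'-1}$.
   Context: Letters are arrows $\alpha\in Q_1$ (direct, traversed from $s(\alpha)$ to $t(\alpha)$) and formal inverses $\alpha^{-1}$ (inverse, traversed from $t(\alpha)$ to $s(\alpha)$). A string is a reduced walk in $Q$ avoiding the relations of $I$ and their inverses; it is identified with its inverse walk. For $C=c_1\cdots c_m$ with vertex positions $v_1,\dots,v_{m+1}$ and $1\le i\le j\le m+1$, $C[i,j]=c_i\cdots c_{j-1}$ (trivial if $i=j$). $C[i,j]$ is on top of $C$ if ($i=1$ or $c_{i-1}$ is inverse) and ($j=m+1$ or $c_j$ is direct); at the bottom if ($i=1$ or $c_{i-1}$ is direct) and ($j=m+1$ or $c_j$ is inverse). An auto-reaching of $C$ is given by a substring on top and a substring at the bottom of $C$ which are equal as strings (equal or mutually inverse walks) and satisfy the swinging arms condition: writing the top one as $C[i_0,j_0]$ and the bottom one as $C[i_0',j_0']$, if $i_0'=1$ then $i_0\ne1$, and if $j_0'=m+1$ then $j_0\ne m+1$. It is intersecting if the two substrings $C[i,j]$, $C[i',j']$ satisfy $i<i'\le j<j'$ or $i'<i\le j'<j$. Two words $\alpha_1\cdots\alpha_k$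 and $\beta_1\cdots\beta_k$ are cyclically equivalent if $\beta_1\cdots\beta_k=\alpha_{r+1}\cdots\alpha_k\alpha_1\cdots\alpha_r$ for some $0\le r<k$. *)

(* Combinatorial presentation of a gentle algebra A = KQ/I:
   a finite quiver (vertices Q0, arrows Q1, source s, target t) together with
   the set of length-2 zero relations generating I, given as a boolean
   predicate rel : rel a b  <->  the path  a b  (first a, then b) lies in I. *)
From mathcomp Require Import all_boot.
Set Implicit Arguments. Unset Strict Implicit. Unset Printing Implicit Defensive.

Inductive letter (A : Type) := Dir of A | Inv of A.
Arguments Dir {A}. Arguments Inv {A}.

Section Gentle.
Variables (Q0 Q1 : finType) (s t : Q1 -> Q0) (rel : Q1 -> Q1 -> bool).

Definition at_most_one (P : Q1 -> Prop) := forall a b, P a -> P b -> a = b.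

Definition composable (p : seq Q1) :=
  forall p1 a b p2, p = p1 ++ a :: b :: p2 -> t a = s b.

Definition contains_relation (p : seq Q1) :=
  exists p1 a b p2, p = p1 ++ a :: b :: p2 /\ rel a b.

Definition gentle :=
  (forall v, #|[pred a | s a == v]| <= 2) /\
  (forall v, #|[pred a | t a == v]| <= 2) /\
  (forall a b, rel a b -> t a = s b) /\
  (forall b, at_most_one (fun a => t a = s b /\ rel a b)) /\
  (forall b, at_most_one (fun a => t a = s b /\ ~~ rel a b)) /\
  (forall a, at_most_one (fun b => t a = s b /\ rel a b)) /\
  (forall a, at_most_one (fun b => t a = s b /\ ~~ rel a b)) /\
  (* finite dimension: every long enough path contains a relation *)
  (exists N, forall p, size p = N -> composable p -> contains_relation p).

Definition lsrc (l : letter Q1) := match l with Dir a => s a | Inv a => t a end.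
Definition ltgt (l : letter Q1) := match l with Dir a => t a | Inv a => s a end.
Definition linv (l : letter Q1) : letter Q1 :=
  match l with Dir a => Inv a | Inv a => Dir a end.

Fixpoint walk_ok (v : Q0) (ls : seq (letter Q1)) : Prop :=
  match ls with
  | [::] => True
  | l :: ls' => lsrc l = v /\ walk_ok (ltgt l) ls'
  end.

Definition walk_end (v : Q0) (ls : seq (letter Q1)) : Q0 := last v (map ltgt ls).

(* two consecutive letters x y are allowed: reduced and avoiding relations
   and their inverses *)
Definition ok_pair (x y : letter Q1) : Prop :=
  match x, y with
  | Dir a, Dir b => ~~ rel a b
  | Inv a, Inv b => ~~ rel b a
  | Dir a, Inv b => a <> b
  | Inv a, Dir b => a <> b
  end.

Definition is_string (v : Q0) (ls : seq (letter Q1)) : Prop :=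
  walk_ok v ls /\
  forall p1 x y p2, ls = p1 ++ x :: y :: p2 -> ok_pair x y.

(* 1-based conventions of the paper: C = c_1 ... c_m, C[i,j] = c_i ... c_(j-1) *)
Definition sub (C : seq (letter Q1)) (i j : nat) := take (j - i) (drop i.-1 C).

(* vertex position v_k (1 <= k <= m+1) of the string starting at v *)
Definition vpos (v : Q0) (C : seq (letter Q1)) (k : nat) := walk_end v (take k.-1 C).

Definition subwalk (v : Q0) (C : seq (letter Q1)) (i j : nat) :=
  (vpos v C i, sub C i j).

Definition same_string (w1 w2 : Q0 * seq (letter Q1)) : Prop :=
  w1 = w2 \/ w1 = (walk_end w2.1 w2.2, rev (map linv w2.2)).

Definition is_dir (o : option (letter Q1)) :=
  exists a, o = Some (Dir a).
Definition is_inv (o : option (letter Q1)) :=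
  exists a, o = Some (Inv a).

(* c_k is onth C k.-1 *)
Definition on_top (C : seq (letter Q1)) (i j : nat) : Prop :=
  (i = 1 \/ is_inv (onth C i.-2)) /\ (j = (size C).+1 \/ is_dir (onth C j.-1)).

Definition at_bottom (C : seq (letter Q1)) (i j : nat) : Prop :=
  (i = 1 \/ is_dir (onth C i.-2)) /\ (j = (size C).+1 \/ is_inv (onth C j.-1)).

Definition valid_range (C : seq (letter Q1)) (i j : nat) :=
  1 <= i /\ i <= j /\ j <= (size C).+1.

Definition auto_reaching (v : Q0) (C : seq (letter Q1)) (top bot : nat * nat) : Prop :=
  let: (i0, j0) := top in
  let: (i0', j0') := bot in
  [/\ valid_range C i0 j0 /\ valid_range C i0' j0',
      on_top C i0 j0 /\ at_bottom C i0' j0',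
      same_string (subwalk v C i0 j0) (subwalk v C i0' j0') &
      (i0' = 1 -> i0 <> 1) /\ (j0' = (size C).+1 -> j0 <> (size C).+1)].

End Gentle.

Definition cyc_equiv (A : Type) (w1 w2 : seq A) :=
  exists r, r < size w1 /\ w2 = rot r w1.

Definition subword_of_power (A : Type) (w p : seq A) :=
  exists k, forall n, n < size w -> onth w n = onth p ((k + n) %% size p).

(* Let W = C[i,j'], of length L + d with L = j - i and d = i' - i (the two
   substrings have the same length L).  If C[i,j] and C[i',j'] are equal walks,
   W has a border of length L, hence period d: W is a prefix of C[i,i']^oo, and
   its suffix C[j,j'] of length d is C[i,i'] rotated by L mod d.  If instead
   C[i,j] is the inverse walk of C[i',j'], the letters of W are exchanged by the
   mirror k |-> L + d - 1 - k up to inversion, so the middle of W is either a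
   letter equal to its own inverse or two consecutive mutually inverse letters;
   neither occurs in a string. *)

From mathcomp Require Import all_boot zify.
Set Implicit Arguments. Unset Strict Implicit. Unset Printing Implicit Defensive.

Section Onth.
Variable T : Type.
Implicit Types w p : seq T.

Lemma onth_drop n w k : onth (drop n w) k = onth w (n + k).
Proof. by rewrite !onthE map_drop nth_drop. Qed.

Lemma onth_take n w k : onth (take n w) k = if k < n then onth w k else None.
Proof.
case: ltnP => [kn | nk]; first by rewrite !onthE map_take nth_take.
by rewrite onth_default // size_take; case: ltnP => // /leq_trans; apply.
Qed.

Lemma onth_rev w k :
  onth (rev w) k = if k < size w then onth w (size w - k.+1) else None.
Proof.
rewrite !onthE map_rev; case: ltnP => [k_lt | k_ge]; first by rewrite nth_rev size_map.
by rewrite nth_default // size_rev size_map.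
Qed.

Lemma onth_some w k : k < size w -> exists x, onth w k = Some x.
Proof. by rewrite -onthTE; case: onth => // x; exists x. Qed.

Lemma onth_rot r p k : r <= size p ->
  onth (rot r p) k = if k < size p then onth p ((r + k) %% size p) else None.
Proof.
move=> rp; rewrite /rot onth_cat onth_drop onth_take size_drop.
case: ltnP => [k_lt | k_ge]; first by rewrite modn_small //; case: ltnP => //; lia.
case: ltnP => k_lt; last by rewrite ifF //; lia.
rewrite ifT; last lia.
by rewrite (_ : r + k = k - (size p - r) + size p) ?modnDr ?modn_small //; lia.
Qed.

Lemma onth_consecutive w k x y : onth w k = Some x -> onth w k.+1 = Some y ->
  w = take k w ++ x :: y :: drop k.+2 w.
Proof.
elim: w k => [|z w IH] [|k] //=; last by move=> /IH wE /wE {1}->.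
by move=> [->]; case: w {IH} => [|y' w] //= [->]; rewrite drop0.
Qed.

End Onth.

Section Border.
Variables (T : Type) (W : seq T) (L d : nat).
Hypotheses (sizeW : size W = L + d) (border : take L W = drop d W).

Lemma border_periodic n : n < size W -> onth W n = onth W (n %% d).
Proof.
have [-> | d_gt0] := posnP d; first by rewrite modn0.
elim/ltn_ind: n => n IH n_lt.
case: (ltnP n d) => [n_lt_d | d_le_n]; first by rewrite modn_small.
have shift : onth W n = onth W (n - d).
  have n_d_lt_L : n - d < L by lia.
  by rewrite -{1}(subnKC d_le_n) -onth_drop -border onth_take n_d_lt_L.
by rewrite shift IH; [rewrite -{2}(subnK d_le_n) modnDr | lia | lia].
Qed.

Lemma border_subword_of_power : 0 < d -> subword_of_power W (take d W).
Proof.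
move=> d_gt0; have size_p : size (take d W) = d by rewrite size_takel; lia.
exists 0 => n n_lt; rewrite add0n size_p onth_take ltn_pmod //.
exact: border_periodic.
Qed.

Lemma border_drop_rot : drop L W = rot (L %% d) (take d W).
Proof.
have [d0 | d_gt0] := posnP d.
  by rewrite d0 take0 drop_oversize //; lia.
have size_p : size (take d W) = d by rewrite size_takel; lia.
apply: eq_from_onth => k; rewrite onth_drop onth_rot size_p; last by rewrite ltnW ?ltn_pmod.
case: ltnP => [k_lt | k_ge]; last by rewrite onth_default //; lia.
rewrite onth_take ltn_pmod // border_periodic; last lia.
by rewrite modnDml.
Qed.

End Border.

Lemma subword_of_power_take (T : Type) (w p : seq T) n :
  subword_of_power w p -> subword_of_power (take n w) p.
Proof.
move=> [k wP]; exists k => m; rewrite size_take_min leq_min => /andP[m_n m_w].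
by rewrite onth_take m_n wP.
Qed.

Section ReversedBorder.
Variables (T : Type) (f : T -> T) (W : seq T) (L d : nat).
Hypotheses (d_gt0 : 0 < d) (d_le_L : d <= L) (sizeW : size W = L + d).
Hypothesis rev_border : take L W = rev (map f (drop d W)).

Lemma rev_border_mirror k : k < L -> onth W k = omap f (onth W (L + d - k.+1)).
Proof.
move=> k_lt; have := congr1 (fun w => onth w k) rev_border.
rewrite onth_take k_lt onth_rev size_map size_drop sizeW ifT; last lia.
by rewrite onth_map onth_drop (_ : d + _ = L + d - k.+1) //; lia.
Qed.

Lemma rev_border_fixpoint_or_backtrack :
  (exists x, f x = x) \/ exists p1 x y p2, W = p1 ++ x :: y :: p2 /\ x = f y.
Proof.
have := odd_double_half (L + d); set m := (L + d)./2.
case: odd => /= sum_eq.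
- left; have [x Wm] : exists x, onth W m = Some x by apply: onth_some; lia.
  have /rev_border_mirror : m < L by lia.
  by rewrite (_ : L + d - m.+1 = m) ?Wm; [case=> fx; exists x | lia].
- right; have [x Wx] : exists x, onth W m.-1 = Some x by apply: onth_some; lia.
  have [y Wy] : exists y, onth W m.-1.+1 = Some y by apply: onth_some; lia.
  exists (take m.-1 W), x, y, (drop m.-1.+2 W); split; first exact: onth_consecutive.
  have /rev_border_mirror : m.-1 < L by lia.
  by rewrite (_ : L + d - m.-1.+1 = m.-1.+1) ?Wx ?Wy; [case | lia].
Qed.

End ReversedBorder.

Section Letters.
Variable Q1 : finType.
Implicit Types (x : letter Q1) (C u w : seq (letter Q1)).

Lemma linvK : involutive (@linv Q1).
Proof. by case. Qed.

Lemma linv_neq x : linv x <> x.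
Proof. by case: x. Qed.

Lemma ok_pair_linv (rel : Q1 -> Q1 -> bool) x : ~ ok_pair rel (linv x) x.
Proof. by case: x => a /(_ erefl). Qed.

Lemma rev_map_linvK u w : u = rev (map (@linv Q1) w) -> w = rev (map (@linv Q1) u).
Proof. by move->; rewrite map_rev revK (mapK linvK). Qed.

Lemma size_sub C i j : 0 < i -> j <= (size C).+1 -> size (sub C i j) = j - i.
Proof. by move=> i_gt0 j_le; rewrite size_takel // size_drop; lia. Qed.

Lemma take_sub C i j k : j <= k -> take (j - i) (sub C i k) = sub C i j.
Proof. by move=> j_le_k; rewrite /sub take_takel //; lia. Qed.

Lemma drop_sub C i j k : 0 < i <= j -> j <= k -> drop (j - i) (sub C i k) = sub C j k.
Proof.
move=> /andP[i_gt0 i_le_j] j_le_k; rewrite /sub.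
have -> : k - i = k - j + (j - i) by lia.
by rewrite -take_drop drop_drop (_ : j - i + i.-1 = j.-1) //; lia.
Qed.

End Letters.

Section Overlap.
Variables (Q1 : finType) (C : seq (letter Q1)) (i i' j j' : nat).
Hypotheses (i_gt0 : 0 < i) (i_lt_i' : i < i') (i'_le_j : i' <= j).
Hypotheses (j'_le : j' <= (size C).+1) (len_eq : j' - i' = j - i).

Let W := sub C i j'.

Let size_W : size W = (j - i) + (i' - i).
Proof. by rewrite size_sub //; lia. Qed.

Let take_W : take (j - i) W = sub C i j.
Proof. by rewrite take_sub //; lia. Qed.

Let drop_W : drop (i' - i) W = sub C i' j'.
Proof. by rewrite drop_sub //; lia. Qed.

Lemma sub_overlap_periodic : sub C i j = sub C i' j' ->
  cyc_equiv (sub C i i') (sub C j j') /\ subword_of_power (sub C i j) (sub C i i').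
Proof.
rewrite -take_W -drop_W => border.
have -> : sub C i i' = take (i' - i) W by rewrite take_sub //; lia.
have -> : sub C j j' = drop (j - i) W by rewrite drop_sub //; lia.
split.
- exists ((j - i) %% (i' - i)); split; last exact: border_drop_rot size_W border.
  by rewrite size_takel ?ltn_pmod ?subn_gt0 //; lia.
- by apply/subword_of_power_take/(border_subword_of_power size_W border); lia.
Qed.

Lemma sub_overlap_rev_backtrack : sub C i j = rev (map (@linv Q1) (sub C i' j')) ->
  exists p1 x p2, sub C i j' = p1 ++ linv x :: x :: p2.
Proof.
rewrite -take_W -drop_W => rev_border.
have [d_gt0 d_le_L] : 0 < i' - i /\ i' - i <= j - i by lia.
have [[x /linv_neq] // | [p1 [x [y [p2 [Wxy xy]]]]]] :=
  rev_border_fixpoint_or_backtrack d_gt0 d_le_L size_W rev_border.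
by exists p1, y, p2; rewrite -xy.
Qed.

End Overlap.

Section Strings.
Variables (Q0 Q1 : finType) (s t : Q1 -> Q0) (rel : Q1 -> Q1 -> bool).
Variables (v : Q0) (C : seq (letter Q1)).

Lemma string_sub_ok_pair i k p1 x y p2 : is_string s t rel v C ->
  sub C i k = p1 ++ x :: y :: p2 -> ok_pair rel x y.
Proof.
move=> [_ C_ok] Csub; apply: (C_ok (take i.-1 C ++ p1) x y (p2 ++ drop (k - i) (drop i.-1 C))).
by rewrite -{1}(cat_take_drop i.-1 C) -{1}(cat_take_drop (k - i) (drop i.-1 C)) -/(sub C i k)
  Csub -!catA.
Qed.

Lemma auto_reaching_sub i0 j0 i0' j0' :
  auto_reaching s t v C (i0, j0) (i0', j0') ->
  [/\ valid_range C i0 j0, valid_range C i0' j0' &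
      sub C i0 j0 = sub C i0' j0' \/ sub C i0 j0 = rev (map (@linv Q1) (sub C i0' j0'))].
Proof. by case=> [[r r'] _ [[_ ->] | [_ ->]] _]; split=> //; [left | right]. Qed.

End Strings.

Theorem mainTheorem8 (Q0 Q1 : finType) (s t : Q1 -> Q0) (rel : Q1 -> Q1 -> bool)
  (hgentle : gentle s t rel)
  (v : Q0) (C : seq (letter Q1)) (hC : is_string s t rel v C)
  (i j i' j' : nat) (hij : i < i' <= j /\ j < j')
  (hAR : auto_reaching s t v C (i, j) (i', j') \/
         auto_reaching s t v C (i', j') (i, j)) :
  cyc_equiv (sub C i i') (sub C j j') /\
  subword_of_power (sub C i j) (sub C i i').
Proof.
case: hij => /andP[i_lt_i' i'_le_j] j_lt_j'.
have [[i_gt0 _] [_ [_ j'_le]] same] : [/\ valid_range C i j, valid_range C i' j' &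
    sub C i j = sub C i' j' \/ sub C i j = rev (map (@linv Q1) (sub C i' j'))].
  case: hAR => /auto_reaching_sub[r r' same]; split=> //.
  by case: same => ->; [left | right; apply: rev_map_linvK].
have len_eq : j' - i' = j - i.
  have : size (sub C i j) = size (sub C i' j').
    by case: same => ->; rewrite ?size_rev ?size_map.
  by rewrite !size_sub //; lia.
case: same => [| /sub_overlap_rev_backtrack[] //]; first exact: sub_overlap_periodic.
by move=> p1 [x [p2 /(string_sub_ok_pair hC) /ok_pair_linv]].
Qed.
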